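(* Let $n,m\ge 1$, let $\mathcal F=(f_1,\dots,f_m)\colon\mathbb R^n\to\mathbb R^m$, let $C\subset\mathbb R^n$, $Q\subset\mathbb R^m$, and let $\{x^k\}$ be generated by the ABP algorithm described in the context. Assume (A1)–(A7) below: (A1) $\mathcal F$ is continuously differentiable; (A2) $C$ and $Q$ are nonempty, closed and convex, and $z_i^*>-\infty$ for each $i$; (A3) each $f_i$ is convex; (A4) $\Omega\neq\emptyset$; (A5) $\lambda_k>0$ for all $k$, $\sum_k\lambda_k=\infty$, $\sum_k\lambda_k^2<\infty$; (A6) there are constants $0<\underline\alpha\le\bar\alpha$, $0<\underline\beta\le\bar\beta$, $0<\underline\gamma\le\bar\gamma$ with $\underline\alpha\le\alpha_k\le\bar\alpha$, $\underline\beta\le\beta_k\le\bar\beta$, $\underline\gamma\le\gamma_k\le\bar\gamma$ for all $k$; (A7) $\varphi_{\mathrm{lb}}=\varphi^*$. Then the whole sequence $\{x^k\}$ converges to some point $x^\infty\in\Omega$.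
   Context: Let $Q^+:=Q-\mathbb R^m_+=\{y-u: y\in Q,\ u\in\mathbb R^m_+\}$. For a nonempty closed convex set $S$, $P_S$ is the Euclidean metric projection onto $S$ and $\mathrm{dist}(\cdot,S)$ the Euclidean distance. Let $z_i^*:=\inf_{x\in C}f_i(x)$, and fix $r=(r_1,\dots,r_m)$ with all $r_i>0$ and $\sum_i r_i=1$. Define $\varphi(x):=\max_{i}r_i(f_i(x)-z_i^* )$, $H(x):=\tfrac12\mathrm{dist}^2(x,C)$, $G(x):=\tfrac12\mathrm{dist}^2(\mathcal F(x),Q^+)$, $\mathcal S:=\{x\in\mathbb R^n: H(x)=0,\ G(x)=0\}$, $\varphi^*:=\inf_{x\in\mathcal S}\varphi(x)$, $\Omega:=\{x\in\mathcal S:\varphi(x)=\varphi^*\}$, and $\varphi_{\mathrm{lb}}:=\inf_{x\in C}\varphi(x)$. ABP algorithm: given $x^0\in\mathbb R^n$, $\mu>0$ and positive sequences $\{\alpha_k\},\{\beta_k\},\{\gamma_k\},\{\lambda_k\}$, for $k=0,1,2,\dots$ compute $p^k:=P_{Q^+}(\mathcal F(x^k))$, $\rho^k:=\mathcal F(x^k)-p^k$, $z^k:=x^k-P_C(x^k)$, $v^k:=J_{\mathcal F}(x^k)^T\rho^k$ (with $J_{\mathcal F}$ the $m\times n$ Jacobian), $w^k:=r_{i^*}\nabla f_{i^*}(x^k)$ for an arbitrary index $i^*\in\arg\max_i r_i(f_i(x^k)-z_i^* )$, $\Delta_k:=\varphi(x^k)-\varphi_{\mathrm{lb}}$, $d^k:=\alpha_k\mathbf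 1_{\{\Delta_k\ge0\}}w^k+\beta_kz^k+\gamma_kv^k$, $\eta_k:=\max(\mu,\|d^k\|)$, and $x^{k+1}:=x^k-(\lambda_k/\eta_k)d^k$. *)

From HB Require Import structures.
From mathcomp Require Import all_boot all_order all_algebra.
From mathcomp Require Import all_classical all_reals all_analysis.
Set Implicit Arguments. Unset Strict Implicit. Unset Printing Implicit Defensive.
Import Order.TTheory GRing.Theory Num.Theory.
Import numFieldNormedType.Exports.
Local Open Scope classical_set_scope.
Local Open Scope ring_scope.

Section ABPDefs.
Variable R : realType.

Definition enorm (n : nat) (v : 'rV[R]_n) : R := Num.sqrt (\sum_(j < n) v 0 j ^+ 2).

Definition edist (n : nat) (S : set 'rV[R]_n) (x : 'rV[R]_n) : R :=
  inf [set enorm (x - y) | y in S].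

Definition is_proj (n : nat) (S : set 'rV[R]_n) (x p : 'rV[R]_n) : Prop :=
  S p /\ forall y, S y -> enorm (x - p) <= enorm (x - y).

Definition convex_set (n : nat) (S : set 'rV[R]_n) : Prop :=
  forall x y (t : R), S x -> S y -> 0 <= t <= 1 -> S (t *: x + (1 - t) *: y).

Definition convex_fun (n : nat) (g : 'rV[R]_n -> R) : Prop :=
  forall x y (t : R), 0 <= t <= 1 -> g (t *: x + (1 - t) *: y) <= t * g x + (1 - t) * g y.

Definition grad (n : nat) (g : 'rV[R]_n -> R) (x : 'rV[R]_n) : 'rV[R]_n :=
  \row_(j < n) 'D_(delta_mx 0 j) g x.

Variables (n m : nat) (f : 'I_m -> 'rV[R]_n -> R).

Definition FF (x : 'rV[R]_n) : 'rV[R]_m := \row_(i < m) f i x.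

Definition jacobian (x : 'rV[R]_n) : 'M[R]_(m, n) :=
  \matrix_(i < m, j < n) (grad (f i) x) 0 j.

Definition orthant : set 'rV[R]_m := [set u | forall i, 0 <= u 0 i].

Definition Qplus (Q : set 'rV[R]_m) : set 'rV[R]_m :=
  [set p | exists y u, Q y /\ orthant u /\ p = y - u].

Variables (C : set 'rV[R]_n) (Q : set 'rV[R]_m) (r : 'I_m -> R).

Definition zstar (i : 'I_m) : R := inf [set f i x | x in C].

Definition phi (x : 'rV[R]_n) : R :=
  sup [set r i * (f i x - zstar i) | i in [set: 'I_m]].

Definition HH (x : 'rV[R]_n) : R := (edist C x) ^+ 2 / 2.
Definition GG (x : 'rV[R]_n) : R := (edist (Qplus Q) (FF x)) ^+ 2 / 2.

Definition Sfeas : set 'rV[R]_n := [set x | HH x = 0 /\ GG x = 0].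
Definition phi_star : R := inf [set phi x | x in Sfeas].
Definition Omega : set 'rV[R]_n := [set x | Sfeas x /\ phi x = phi_star].
Definition phi_lb : R := inf [set phi x | x in C].

Definition is_argmax (x : 'rV[R]_n) (i : 'I_m) : Prop :=
  forall j, r j * (f j x - zstar j) <= r i * (f i x - zstar i).

Definition abp_step (mu alpha beta gamma lambda : R) (xk xk1 : 'rV[R]_n) : Prop :=
  exists (pk : 'rV[R]_m) (ck : 'rV[R]_n) (istar : 'I_m),
    is_proj (Qplus Q) (FF xk) pk /\ is_proj C xk ck /\ is_argmax xk istar /\
    let rho := FF xk - pk in
    let z := xk - ck in
    let v := rho *m jacobian xk in            (* = (J_F(x^k)^T rho^k)^T *)
    let w := r istar *: grad (f istar) xk in
    let Delta := phi xk - phi_lb in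
    let d := (if 0 <= Delta then alpha else 0) *: w + beta *: z + gamma *: v in
    let eta := Num.max mu (enorm d) in
    xk1 = xk - (lambda / eta) *: d.

End ABPDefs.

From Pilot Require Import Defs.
From mathcomp Require Import all_boot all_order all_algebra.
From mathcomp Require Import all_classical all_reals all_analysis.
From mathcomp Require Import ring lra.
Set Implicit Arguments. Unset Strict Implicit. Unset Printing Implicit Defensive.
Import Order.TTheory GRing.Theory Num.Theory.
Import numFieldNormedType.Exports.
Local Open Scope classical_set_scope.
Local Open Scope ring_scope.

(* Fix x* in Omega.  Convexity of the f_i, the variational inequalities of the
   projections onto C and Q^+ (the residual rho^k is nonnegative because Q^+ is
   stable under subtracting the orthant) and (A7) give
     theta_k := [Delta_k >= 0] alpha_k (phi(x^k) - phi^* )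
                + beta_k |z^k|^2 + gamma_k |rho^k|^2  <=  <d^k, x^k - x*>,
   hence the quasi-Fejer inequality
     |x^{k+1} - x*|^2 <= |x^k - x*|^2 + lambda_k^2 - 2 (lambda_k / eta_k) theta_k.
   So the iterates and the directions d^k are bounded, eta_k <= M, and
   sum_k lambda_k theta_k < oo together with sum_k lambda_k = oo makes theta_k
   small infinitely often.  A cluster point xb of the corresponding iterates is
   feasible with phi(xb) <= phi^*, i.e. lies in Omega, and the quasi-Fejer
   inequality at x* = xb forces the whole sequence to converge to xb. *)

Section Euclidean.
Variables (R : realType) (n : nat).
Implicit Types (u v w : 'rV[R]_n) (a : R).

Definition dot u v : R := \sum_(j < n) u 0 j * v 0 j.

Lemma dotC u v : dot u v = dot v u.
Proof. by apply: eq_bigr => j _; rewrite mulrC. Qed.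

Lemma dotDl u v w : dot (u + v) w = dot u w + dot v w.
Proof. by rewrite /dot -big_split; apply: eq_bigr => j _; rewrite mxE mulrDl. Qed.

Lemma dotNl u w : dot (- u) w = - dot u w.
Proof. by rewrite /dot -sumrN; apply: eq_bigr => j _; rewrite mxE mulNr. Qed.

Lemma dotZl a u w : dot (a *: u) w = a * dot u w.
Proof. by rewrite /dot mulr_sumr; apply: eq_bigr => j _; rewrite mxE mulrA. Qed.

Lemma dotBl u v w : dot (u - v) w = dot u w - dot v w.
Proof. by rewrite dotDl dotNl. Qed.

Lemma dotDr u v w : dot w (u + v) = dot w u + dot w v.
Proof. by rewrite dotC dotDl !(dotC w). Qed.

Lemma dotNr u w : dot w (- u) = - dot w u.
Proof. by rewrite dotC dotNl dotC. Qed.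

Lemma dotBr u v w : dot w (u - v) = dot w u - dot w v.
Proof. by rewrite dotDr dotNr. Qed.

Lemma dotZr a u w : dot w (a *: u) = a * dot w u.
Proof. by rewrite dotC dotZl dotC. Qed.

Lemma dot_delta w i : dot w (delta_mx 0 i) = w 0 i.
Proof.
rewrite /dot (bigD1 i) //= mxE !eqxx mulr1 big1 ?addr0 // => j ji.
by rewrite mxE (negbTE ji) andbF mulr0.
Qed.

Lemma dotvv_ge0 u : 0 <= dot u u.
Proof. by apply: sumr_ge0 => j _; rewrite -expr2 sqr_ge0. Qed.

Lemma dotvv_eq0 u v : dot v v = 0 -> dot u v = 0.
Proof.
move=> vv0; rewrite /dot big1 // => j _.
have vj_ge0 i : predT i -> 0 <= v 0 i * v 0 i by rewrite -expr2 sqr_ge0.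
have /eqP := @psumr_eq0P R _ predT (fun j => v 0 j * v 0 j) vj_ge0 vv0 j isT.
by rewrite mulf_eq0 orbb => /eqP ->; rewrite mulr0.
Qed.

Lemma enorm_ge0 u : 0 <= enorm u.
Proof. exact: sqrtr_ge0. Qed.

Lemma enorm_sqr u : enorm u ^+ 2 = dot u u.
Proof.
rewrite /enorm sqr_sqrtr; last by apply: sumr_ge0 => j _; rewrite sqr_ge0.
by apply: eq_bigr => j _; rewrite expr2.
Qed.

Lemma enormE u : enorm u = Num.sqrt (dot u u).
Proof. by rewrite -enorm_sqr sqrtr_sqr ger0_norm // enorm_ge0. Qed.

Lemma cauchy_schwarz u v : dot u v <= enorm u * enorm v.
Proof.
apply: le_trans (ler_norm _) _.
rewrite !enormE -sqrtrM ?dotvv_ge0 // -(sqrtr_sqr (dot u v)) ler_sqrt; last first.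
  by rewrite mulr_ge0 ?dotvv_ge0.
have [vv0|vv_neq0] := eqVneq (dot v v) 0.
  by rewrite dotvv_eq0 // vv0 expr0n /= mulr0.
have vv_gt0 : 0 < dot v v by rewrite lt_neqAle eq_sym vv_neq0 dotvv_ge0.
have := dotvv_ge0 (u - (dot u v / dot v v) *: v).
rewrite !(dotBl, dotBr, dotZl, dotZr) (dotC v u).
move: (dot u u) (dot u v) (dot v v) vv_gt0 vv_neq0 => a b c c_gt0 c_neq0.
have -> : a - b / c * b - b / c * (b - b / c * c) = (a * c - b ^+ 2) / c by field.
by rewrite pmulr_lge0 ?invr_gt0 // subr_ge0.
Qed.

Lemma enormD_le u v : enorm (u + v) <= enorm u + enorm v.
Proof.
rewrite -(@ler_pXn2r _ 2) ?nnegrE ?addr_ge0 ?enorm_ge0 //.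
rewrite enorm_sqr sqrrD !enorm_sqr dotDl !dotDr (dotC v u).
have := cauchy_schwarz u v; lra.
Qed.

Lemma enormN u : enorm (- u) = enorm u.
Proof. by rewrite !enormE dotNl dotNr opprK. Qed.

Lemma enorm_distC u v : enorm (u - v) = enorm (v - u).
Proof. by rewrite -enormN opprB. Qed.

Lemma enormZ a u : enorm (a *: u) = `|a| * enorm u.
Proof. by rewrite !enormE dotZl dotZr mulrA -expr2 sqrtrM ?sqr_ge0 // sqrtr_sqr. Qed.

Lemma coord_le_enorm u j : `|u 0 j| <= enorm u.
Proof.
rewrite -(@ler_pXn2r _ 2) ?nnegrE ?enorm_ge0 //.
rewrite real_normK ?num_real // enorm_sqr /dot (bigD1 j) //= -expr2 lerDl.
by apply: sumr_ge0 => i _; rewrite -expr2 sqr_ge0.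
Qed.

Lemma enorm_le_sum_coord u : enorm u <= \sum_j `|u 0 j|.
Proof.
rewrite -(@ler_pXn2r _ 2) ?nnegrE ?enorm_ge0 ?sumr_ge0 // enorm_sqr /dot.
suff : \sum_(j < n) u 0 j * u 0 j <= (\sum_j `|u 0 j|) ^+ 2 /\ 0 <= \sum_j `|u 0 j|.
  by case.
elim/big_rec2: _ => [|j a b _ [IH b_ge0]]; first by rewrite expr0n.
split; last by rewrite addr_ge0.
rewrite -expr2 -real_normK ?num_real // sqrrD.
have := normr_ge0 (u 0 j); nra.
Qed.

Lemma enorm_le_coord u B : (forall j, `|u 0 j| <= B) -> enorm u <= n%:R * B.
Proof.
move=> uB; apply: le_trans (enorm_le_sum_coord u) _.
apply: le_trans (ler_sum _ (fun j _ => uB j)) _.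
by rewrite sumr_const card_ord mulr_natl.
Qed.

Lemma coord_le_mx_norm u j : `|u 0 j| <= `|u|.
Proof.
rewrite [X in _ <= X]/Num.norm /= mx_normrE.
exact: le_trans _ (le_bigmax _ _ (0, j)).
Qed.

Lemma mx_norm_le_enorm u : `|u| <= enorm u.
Proof.
rewrite [X in X <= _]/Num.norm /= mx_normrE.
apply: bigmax_le; first exact: enorm_ge0.
by move=> [i j] _; rewrite /= (ord1 i); exact: coord_le_enorm.
Qed.

Lemma enorm_le_mx_norm u : enorm u <= n%:R * `|u|.
Proof. exact/enorm_le_coord/coord_le_mx_norm. Qed.

End Euclidean.

Lemma enorm_mulmx_le (R : realType) m n (u : 'rV[R]_m) (A : 'M[R]_(m, n)) B :
  (forall i j, `|A i j| <= B) -> enorm (u *m A) <= n%:R * (m%:R * (enorm u * B)).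
Proof.
move=> AB; apply: enorm_le_coord => j; rewrite mxE.
apply: le_trans (ler_norm_sum _ _ _) _.
have -> : m%:R * (enorm u * B) = \sum_(i < m) enorm u * B.
  by rewrite sumr_const card_ord mulr_natl.
apply: ler_sum => i _.
by rewrite normrM ler_pM ?normr_ge0 ?coord_le_enorm.
Qed.

Lemma le0_of_le_mul_small (R : realType) (a K : R) :
  0 <= K -> (forall e, 0 < e <= 1 -> a <= K * e) -> a <= 0.
Proof.
move=> K_ge0 small; rewrite leNgt; apply/negP => a_gt0.
have K1_gt0 : 0 < K + 1 by rewrite ltr_wpDl.
pose e := Num.min 1 (a / (K + 1)).
have e_gt0 : 0 < e by rewrite lt_min ltr01 divr_gt0.
have e_le : e <= a / (K + 1) by rewrite ge_min lexx orbT.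
have := small e; rewrite e_gt0 ge_min lexx /= => /(_ isT).
have : K * e <= K * (a / (K + 1)) by rewrite ler_wpM2l.
have -> : K * (a / (K + 1)) = a - a / (K + 1) by field; rewrite gt_eqF.
have : 0 < a / (K + 1) by rewrite divr_gt0.
lra.
Qed.

Lemma sqr_half_eq0 (R : realType) (a : R) : a ^+ 2 / 2 = 0 -> a = 0.
Proof. by move/eqP; rewrite mulf_eq0 invr_eq0 pnatr_eq0 orbF expf_eq0 => /eqP. Qed.

Section Projection.
Variables (R : realType) (n : nat) (S : set 'rV[R]_n).

Lemma edist_set_le x y : S y -> Defs.edist S x <= enorm (x - y).
Proof.
move=> Sy; apply: ge_inf; last by exists y.
by exists 0 => _ [z _ <-]; exact: enorm_ge0.
Qed.

Lemma edist_set_ge0 x : S !=set0 -> 0 <= Defs.edist S x.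
Proof.
move=> [y Sy]; apply: lb_le_inf; first by exists (enorm (x - y)), y.
by move=> _ [z _ <-]; exact: enorm_ge0.
Qed.

Lemma edist_set_eq0_approx x : S !=set0 -> Defs.edist S x = 0 ->
  forall e, 0 < e -> exists2 y, S y & enorm (x - y) < e.
Proof.
move=> [y0 Sy0] dist0 e e_gt0.
have ne : [set enorm (x - y) | y in S] !=set0 by exists (enorm (x - y0)), y0.
have /(inf_lt ne) [_ [y Sy <-] lt] : Defs.edist S x < Defs.edist S x + e.
  by rewrite ltrDl.
by exists y => //; rewrite dist0 add0r in lt.
Qed.

Lemma enorm_proj_le y p q :
  is_proj S y p -> S q -> enorm (y - p) <= enorm y + enorm q.
Proof.
move=> [_ p_min] Sq; apply: le_trans (p_min q Sq) _.
by apply: le_trans (enormD_le _ _) _; rewrite enormN.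
Qed.

Hypothesis convS : Defs.convex_set S.

Lemma proj_variational x p y : is_proj S x p -> S y -> dot (x - p) (y - p) <= 0.
Proof.
move=> [Sp p_min] Sy; apply: (le0_of_le_mul_small (dotvv_ge0 (y - p))).
move=> t /andP[t_gt0 t_le1].
have t01 : 0 <= t <= 1 by rewrite ltW.
have := p_min _ (convS Sy Sp t01).
have -> : x - (t *: y + (1 - t) *: p) = (x - p) - t *: (y - p).
  by apply/rowP => j; rewrite !mxE; ring.
rewrite -(@ler_pXn2r _ 2) ?nnegrE ?enorm_ge0 // !enorm_sqr.
move: (x - p) (y - p) => X Y.
rewrite dotBl !dotBr !dotZl !dotZr (dotC Y X).
have := dotvv_ge0 Y; nra.
Qed.

Lemma proj_variational_edist0 x p y : is_proj S x p -> Defs.edist S y = 0 ->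
  dot (x - p) (y - p) <= 0.
Proof.
move=> Pp dist0; apply: (le0_of_le_mul_small (enorm_ge0 (x - p))) => e /andP[e_gt0 _].
have [y' Sy' lt] := edist_set_eq0_approx (ex_intro _ p Pp.1) dist0 e_gt0.
have -> : y - p = (y' - p) + (y - y') by apply/rowP => j; rewrite !mxE; ring.
rewrite dotDr; have := proj_variational Pp Sy'; have := cauchy_schwarz (x - p) (y - y').
have := ler_wpM2l (enorm_ge0 (x - p)) (ltW lt); lra.
Qed.

Lemma dist_sqr_le_dot xk ck xs : is_proj S xk ck -> Defs.edist S xs = 0 ->
  enorm (xk - ck) ^+ 2 <= dot (xk - ck) (xk - xs).
Proof.
move=> Pc dist0.
have -> : xk - xs = (xk - ck) - (xs - ck) by apply/rowP => j; rewrite !mxE; ring.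
rewrite dotBr enorm_sqr; have := proj_variational_edist0 Pc dist0; lra.
Qed.

End Projection.

Lemma convex_set_comb (R : realType) n (S : set 'rV[R]_n) :
  convex_set S -> Defs.convex_set S.
Proof.
move=> convS x y t Sx Sy /andP[t_ge0 t_le1].
by have /set_mem := convS x y (Itv01 t_ge0 t_le1) (mem_set Sx) (mem_set Sy).
Qed.

Section Qplus.
Variables (R : realType) (m : nat) (Q : set 'rV[R]_m).

Lemma Qplus_neq0 : Q !=set0 -> Qplus Q !=set0.
Proof.
move=> [q Qq]; exists q, q, 0; split => //; split; last by rewrite subr0.
by move=> i; rewrite mxE.
Qed.

Lemma Qplus_convex : Defs.convex_set Q -> Defs.convex_set (Qplus Q).
Proof.
move=> convQ _ _ t [y1 [u1 [Qy1 [u1_ge0 ->]]]] [y2 [u2 [Qy2 [u2_ge0 ->]]]] t01.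
exists (t *: y1 + (1 - t) *: y2), (t *: u1 + (1 - t) *: u2); split; first exact: convQ.
split; last by apply/rowP => j; rewrite !mxE; ring.
move=> i; rewrite !mxE; case/andP: t01 => t_ge0 t_le1.
by rewrite addr_ge0 // mulr_ge0 ?u1_ge0 ?u2_ge0 ?subr_ge0.
Qed.

Lemma Qplus_sub_delta p i : Qplus Q p -> Qplus Q (p - delta_mx 0 i).
Proof.
move=> [y [u [Qy [u_ge0 ->]]]]; exists y, (u + delta_mx 0 i); split => //; split.
  by move=> j; rewrite !mxE addr_ge0 ?u_ge0.
by rewrite opprD addrA.
Qed.

Lemma proj_Qplus_residual_ge0 y p i : Defs.convex_set Q ->
  is_proj (Qplus Q) y p -> 0 <= (y - p) 0 i.
Proof.
move=> convQ Pp.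
have := proj_variational (Qplus_convex convQ) Pp (Qplus_sub_delta i Pp.1).
by rewrite addrAC subrr add0r dotNr dot_delta oppr_le0.
Qed.

End Qplus.

Section Gradient.
Variables (R : realType) (n : nat) (g : 'rV[R]_n -> R).

Lemma derive_grad x h : differentiable g x -> 'D_h g x = dot (grad g x) h.
Proof.
move=> dg; rewrite deriveE //.
rewrite [in LHS](_ : h = \sum_j h 0 j *: delta_mx 0 j); last first.
  by rewrite {1}(matrix_sum_delta h) big_ord1.
rewrite linear_sum /dot; apply: eq_bigr => j _.
by rewrite linearZ /= -deriveE // mxE mulrC.
Qed.

Lemma convex_grad_le x y : differentiable g x -> convex_fun g ->
  dot (grad g x) (y - x) <= g y - g x.
Proof.
move=> dg convg; rewrite -derive_grad //.
have right_sub : ((0:R)^'+) `=>` ((0:R)^').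
  move=> A; rewrite /at_right /dnbhs /within /=; apply: filterS => u Au u_gt0.
  by apply: Au; rewrite gt_eqF.
have D : derivable g x (y - x) by exact: diff_derivable.
apply: (cvgr_to_le (cvg_trans (cvg_app _ right_sub) D)); near=> h.
have h_gt0 : 0 < h by near: h; exact: nbhs_right_gt.
have h_le1 : h <= 1 by near: h; exact: nbhs_right_le.
rewrite /= /shift.
have -> : h *: (y - x) + x = h *: y + (1 - h) *: x by apply/rowP => j; rewrite !mxE; ring.
have := convg y x h; rewrite h_le1 ltW //= => /(_ isT) convex_ineq.
change (h^-1 * (g (h *: y + (1 - h) *: x) - g x) <= g y - g x).
by rewrite mulrC ler_pdivrMr //; lra.
Unshelve. all: by end_near.
Qed.

End Gradient.

Section QuasiFejer.
Variable R : realType.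
Implicit Types (a e c lam th : nat -> R).

Definition frequently_small (u : nat -> R) :=
  forall eps, 0 < eps -> forall N, exists2 k, (N <= k)%N & u k < eps.

Lemma summable_tail_le e N K : (forall k, 0 <= e k) -> cvgn (series e) ->
  (N <= K)%N -> \sum_(N <= k < K) e k <= limn (series e) - series e N.
Proof.
move=> e_ge0 cvg_e NK; rewrite -sub_series_geq // lerD2r.
exact: nondecreasing_cvgn_le (nondecreasing_series (fun k _ _ => e_ge0 k)) cvg_e K.
Qed.

Lemma quasi_fejer_sum a e c : (forall k, a k.+1 <= a k + e k - c k) ->
  forall N K, (N <= K)%N ->
  a K + \sum_(N <= k < K) c k <= a N + \sum_(N <= k < K) e k.
Proof.
move=> step N K /subnK <-; elim: (K - N)%N => [|d IH].
  by rewrite add0n !big_geq // !addr0.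
rewrite addSn !big_nat_recr ?leq_addl //=.
have := step (d + N)%N; lra.
Qed.

Lemma quasi_fejer_bounded a e c : (forall k, a k.+1 <= a k + e k - c k) ->
  (forall k, 0 <= e k) -> cvgn (series e) ->
  forall K, a K + \sum_(0 <= k < K) c k <= a 0%N + limn (series e).
Proof.
move=> step e_ge0 cvg_e K.
have := summable_tail_le e_ge0 cvg_e (leq0n K).
have := quasi_fejer_sum step (leq0n K).
by rewrite [series e 0%N]big_geq //; lra.
Qed.

Lemma frequently_small_weighted lam th B : (forall k, 0 < lam k) ->
  (forall k, 0 <= th k) -> series lam @ \oo --> +oo ->
  (forall K, \sum_(0 <= k < K) lam k * th k <= B) -> frequently_small th.
Proof.
move=> lam_gt0 th_ge0 lam_div sum_le eps eps_gt0 N.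
have [//|not_small] := pselect (exists2 k, (N <= k)%N & th k < eps).
have th_ge k : (N <= k)%N -> eps <= th k.
  by move=> Nk; rewrite leNgt; apply/negP => lt; apply: not_small; exists k.
have /cvgryPgtr /(_ (series lam N + B / eps) (num_real _)) := lam_div.
move=> /(filterI (nbhs_infty_ge N)) /filter_ex [K [NK lt_K]].
suff : eps * (series lam K - series lam N) <= B.
  by rewrite mulrC -ler_pdivlMr //; lra.
apply: le_trans (sum_le K); rewrite sub_series_geq // mulr_sumr.
rewrite [X in _ <= X](@big_cat_nat _ _ _ N) //= -[X in X <= _]add0r.
apply: lerD; first by apply: sumr_ge0 => k _; rewrite mulr_ge0 ?th_ge0 ?(ltW (lam_gt0 k)).
rewrite big_nat_cond [X in _ <= X]big_nat_cond.
apply: ler_sum => k /andP[/andP[Nk _] _].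
by rewrite mulrC ler_wpM2l ?th_ge ?(ltW (lam_gt0 k)).
Qed.

Lemma eventually_small_quasi_fejer a e : (forall k, a k.+1 <= a k + e k) ->
  (forall k, 0 <= e k) -> cvgn (series e) -> frequently_small a ->
  forall eps, 0 < eps -> \forall k \near \oo, a k <= eps.
Proof.
move=> step e_ge0 cvg_e a_small eps eps_gt0.
have eps2_gt0 : 0 < eps / 2 by rewrite divr_gt0.
have /cvgrPdist_lt /(_ _ eps2_gt0) /filter_ex [N0 tail_lt] := cvg_e.
have [k N0k ak_lt] := a_small _ eps2_gt0 N0.
near=> K; have kK : (k <= K)%N by near: K; exact: nbhs_infty_ge.
have step0 j : a j.+1 <= a j + e j - 0 by rewrite subr0.
have := quasi_fejer_sum step0 kK; rewrite big1_eq addr0.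
have := summable_tail_le e_ge0 cvg_e kK.
have : series e N0 <= series e k := nondecreasing_series (fun j _ _ => e_ge0 j) N0k.
have := ler_norm (limn (series e) - series e N0).
lra.
Unshelve. all: by end_near.
Qed.

End QuasiFejer.

Section RowTopology.
Variables (R : realType) (n : nat).

Lemma compact_mx_norm_le (B : R) : compact [set v : 'rV[R]_n | `|v| <= B].
Proof.
apply: bounded_closed_compact.
  by exists B; split; [exact: num_real | move=> M BM v /= vB; exact: le_trans vB (ltW BM)].
have norm_cont : {in ~` (Num.norm @^-1` [set x | x <= B]),
    continuous (Num.norm : 'rV[R]_n -> R)}.
  by move=> v _; exact: norm_continuous.
exact: preimage_closed norm_cont (@closed_le _ B).
Qed.

Lemma bounded_on_mx_norm_le (V : normedModType R) (I : finType)
    (g : I -> 'rV[R]_n -> V) (B : R) : (forall i, continuous (g i)) ->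
  exists M, 0 <= M /\ forall i y, `|y| <= B -> `|g i y| <= M.
Proof.
move=> g_cont.
have bounded_i i : exists M : R, forall y, `|y| <= B -> `|g i y| <= M.
  have g_cont_on : {within [set v | `|v| <= B], continuous g i}.
    exact: continuous_subspaceT.
  have := continuous_compact g_cont_on (compact_mx_norm_le (B := B)).
  move=> /compact_bounded [M [_ gM]].
  by exists (M + 1) => y yB; apply: gM; [rewrite ltrDl | exists y].
have [M M_spec] := choice bounded_i.
exists (\sum_i `|M i|); split => [|i y yB]; first exact: sumr_ge0.
apply: le_trans (M_spec i y yB) (le_trans (ler_norm _) _).
by rewrite (bigD1 i) //= lerDl sumr_ge0.
Qed.

Lemma near_continuous_family (I : finType) (g : I -> 'rV[R]_n -> R) xb (eps : R) :
  (forall i, continuous (g i)) -> 0 < eps ->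
  exists2 del, 0 < del & forall y, `|xb - y| < del -> forall i, `|g i xb - g i y| < eps.
Proof.
move=> g_cont eps_gt0.
have : \forall y \near xb, forall i, `|g i xb - g i y| < eps.
  apply: (@filter_forall _ I (fun i y => `|g i xb - g i y| < eps) (nbhs xb) _) => i.
  by have /cvgrPdist_lt /(_ eps eps_gt0) := g_cont i xb.
by move/nbhs_normP => [del del_gt0 close]; exists del => // y /close.
Qed.

Lemma cluster_point_along (x : nat -> 'rV[R]_n) (th : nat -> R) (B : R) :
  (forall k, `|x k| <= B) -> frequently_small th ->
  exists xb, forall eps, 0 < eps -> forall N,
    exists k, [/\ (N <= k)%N, th k < eps & `|xb - x k| < eps].
Proof.
move=> xB th_small.
have small_after j : exists k, (j <= k)%N /\ th k < j.+1%:R^-1.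
  have j_gt0 : 0 < j.+1%:R^-1 :> R by rewrite invr_gt0 ltr0Sn.
  by have [k jk ?] := th_small _ j_gt0 j; exists k.
have [kk kk_spec] := choice small_after.
pose y j := x (kk j).
have y_bounded : \forall j \near \oo, `|y j| <= B by apply: nearW => j; exact: xB.
have [xb [_ xb_cluster]] := compact_mx_norm_le (F := y @ \oo) _ y_bounded.
exists xb => eps eps_gt0 N.
have near_xb : nbhs xb [set z | `|xb - z| < eps].
  by apply/nbhs_ballP; exists eps => // z; rewrite -ball_normE.
have late : (y @ \oo) (y @` [set j | (N <= j)%N /\ j.+1%:R^-1 < eps]).
  apply: filterS (fun j Sj => ex_intro2 _ _ j Sj erefl) _.
  near=> j; split; near: j; first exact: nbhs_infty_ge.
  exact: (near_infty_natSinv_lt (PosNum eps_gt0)).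
have [_ [[j [Nj j_lt] <-] close]] := xb_cluster _ _ late near_xb.
exists (kk j); split => //; first exact: leq_trans Nj (kk_spec j).1.
exact: lt_trans (kk_spec j).2 j_lt.
Unshelve. all: by end_near.
Qed.

Lemma cvg_quasi_fejer_cluster (x : nat -> 'rV[R]_n) (xb : 'rV[R]_n) (e : nat -> R) :
  (forall k, enorm (x k.+1 - xb) ^+ 2 <= enorm (x k - xb) ^+ 2 + e k) ->
  (forall k, 0 <= e k) -> cvgn (series e) ->
  (forall eps, 0 < eps -> forall N, exists2 k, (N <= k)%N & `|xb - x k| < eps) ->
  x @ \oo --> xb.
Proof.
move=> step e_ge0 cvg_e xb_cluster.
have dist_small : frequently_small (fun k => enorm (x k - xb) ^+ 2).
  move=> eps eps_gt0 N.
  have mn_gt0 : 0 < Num.min 1 eps by rewrite lt_min ltr01.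
  have n1_gt0 : 0 < n%:R + 1 :> R by rewrite ltr_wpDl.
  pose del := Num.min 1 eps / (n%:R + 1).
  have del_gt0 : 0 < del by rewrite divr_gt0.
  have ndel_lt : n%:R * del < Num.min 1 eps by rewrite /del mulrA ltr_pdivrMr //; nra.
  have [k Nk close] := xb_cluster _ del_gt0 N; exists k => //.
  have : enorm (x k - xb) < Num.min 1 eps.
    rewrite enorm_distC; apply: le_lt_trans (enorm_le_mx_norm _) (le_lt_trans _ ndel_lt).
    by rewrite ler_wpM2l // ltW.
  have := enorm_ge0 (x k - xb); rewrite lt_min => d_ge0 /andP[d_lt1 d_lt].
  nra.
apply/cvgrPdist_lt => eps eps_gt0.
have eps2_gt0 : 0 < (eps / 2) ^+ 2 by rewrite exprn_gt0 // divr_gt0.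
apply: filterS (eventually_small_quasi_fejer step e_ge0 cvg_e dist_small eps2_gt0).
move=> k dist_le; apply: le_lt_trans (mx_norm_le_enorm _) _.
rewrite enorm_distC; apply: le_lt_trans (_ : _ <= eps / 2) _; last by lra.
by rewrite -(@ler_pXn2r _ 2) ?nnegrE ?enorm_ge0 ?divr_ge0 ?(ltW eps_gt0).
Qed.

End RowTopology.

Section Merit.
Variables (R : realType) (n m : nat) (f : 'I_m -> 'rV[R]_n -> R).
Variables (C : set 'rV[R]_n) (r : 'I_m -> R).

Lemma phi_ge_term x i : r i * (f i x - zstar f C i) <= phi f C r x.
Proof.
apply: ub_le_sup; last by exists i.
exists (\sum_j `|r j * (f j x - zstar f C j)|) => _ [j _ <-].
apply: le_trans (ler_norm _) _.
by rewrite (bigD1 j) //= lerDl sumr_ge0.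
Qed.

Lemma phi_le_ub (i0 : 'I_m) x B :
  (forall i, r i * (f i x - zstar f C i) <= B) -> phi f C r x <= B.
Proof.
move=> termB; apply: ge_sup; first by exists (r i0 * (f i0 x - zstar f C i0)), i0.
by move=> _ [i _ <-]; exact: termB.
Qed.

Lemma phi_argmax x i : is_argmax f C r x i -> phi f C r x = r i * (f i x - zstar f C i).
Proof.
by move=> imax; apply/eqP; rewrite eq_le phi_ge_term andbT (phi_le_ub i).
Qed.

Hypothesis f_lb : forall i, exists M : R, forall y, C y -> M <= f i y.

Lemma zstar_le i y : C y -> zstar f C i <= f i y.
Proof.
move=> Cy; have [M fM] := f_lb i; apply: ge_inf; last by exists y.
by exists M => _ [z Cz <-]; exact: fM.
Qed.

Lemma phi_lb_le (i0 : 'I_m) y : (forall i, 0 <= r i) -> C y ->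
  phi_lb f C r <= phi f C r y.
Proof.
move=> r_ge0 Cy; apply: ge_inf; last by exists y.
exists 0 => _ [z Cz <-]; apply: le_trans (phi_ge_term z i0).
by rewrite mulr_ge0 ?r_ge0 // subr_ge0 zstar_le.
Qed.

End Merit.

Section DescentInequalities.
Variables (R : realType) (n m : nat) (f : 'I_m -> 'rV[R]_n -> R).
Hypotheses (f_diff : forall i y, differentiable (f i) y)
  (f_convex : forall i, convex_fun (f i)).

Lemma linearization_le i xk xs :
  f i xk - f i xs <= dot (grad (f i) xk) (xk - xs).
Proof.
have := convex_grad_le xs (f_diff i xk) (f_convex i).
by rewrite -[xk - xs]opprB dotNr; lra.
Qed.

Lemma dot_mulmx_jacobian x (rho : 'rV[R]_m) h :
  dot (rho *m Defs.jacobian f x) h = \sum_i rho 0 i * dot (grad (f i) x) h.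
Proof.
rewrite /dot; under eq_bigr do rewrite mxE mulr_suml.
rewrite exchange_big /=; apply: eq_bigr => i _.
by rewrite mulr_sumr; apply: eq_bigr => j _; rewrite mxE mulrA.
Qed.

Lemma residual_sqr_le_dot (Q : set 'rV[R]_m) xk pk xs : Defs.convex_set Q ->
  is_proj (Qplus Q) (FF f xk) pk -> Defs.edist (Qplus Q) (FF f xs) = 0 ->
  enorm (FF f xk - pk) ^+ 2 <= dot ((FF f xk - pk) *m Defs.jacobian f xk) (xk - xs).
Proof.
move=> convQ Pp dist0.
(* the residual is nonnegative, so the convexity of each f_i can be summed against it *)
have Fdiff_le : dot (FF f xk - pk) (FF f xk - FF f xs) <=
    dot ((FF f xk - pk) *m Defs.jacobian f xk) (xk - xs).
  rewrite dot_mulmx_jacobian; apply: ler_sum => i _.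
  rewrite [in X in X <= _]mxE /FF !mxE; apply: ler_wpM2l.
    by have := proj_Qplus_residual_ge0 i convQ Pp; rewrite !mxE.
  exact: (linearization_le i xk xs).
apply: le_trans Fdiff_le.
by have := dist_sqr_le_dot (Qplus_convex convQ) Pp dist0.
Qed.

Lemma gap_le_dot (C : set 'rV[R]_n) (r : 'I_m -> R) xk i xs : 0 <= r i ->
  is_argmax f C r xk i ->
  phi f C r xk - phi f C r xs <= dot (r i *: grad (f i) xk) (xk - xs).
Proof.
move=> r_ge0 imax; rewrite (phi_argmax imax) dotZl.
have := phi_ge_term f C r xs i.
have := ler_wpM2l r_ge0 (linearization_le i xk xs).
lra.
Qed.

End DescentInequalities.

Section ABP.
Variables (R : realType) (n m : nat) (f : 'I_m -> 'rV[R]_n -> R).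
Variables (C : set 'rV[R]_n) (Q : set 'rV[R]_m) (r : 'I_m -> R).
Variables (mu : R) (alpha beta gamma lambda : nat -> R) (x : nat -> 'rV[R]_n).
Variables (alo ahi blo bhi glo ghi : R).
Variables (pQ : nat -> 'rV[R]_m) (pC : nat -> 'rV[R]_n) (istar : nat -> 'I_m).

Hypotheses (m_gt0 : (0 < m)%N) (r_gt0 : forall i, 0 < r i)
  (r_sum1 : \sum_(i < m) r i = 1).
Hypotheses (f_diff : forall i y, differentiable (f i) y)
  (grad_cont : forall i, continuous (grad (f i))).
Hypotheses (C0 : C !=set0) (C_closed : closed C) (C_convex : Defs.convex_set C).
Hypotheses (Q0 : Q !=set0) (Q_convex : Defs.convex_set Q).
Hypotheses (f_lb : forall i, exists M : R, forall y, C y -> M <= f i y)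
  (f_convex : forall i, convex_fun (f i)).
Hypothesis Omega0 : Omega f C Q r !=set0.
Hypotheses (lambda_gt0 : forall k, 0 < lambda k)
  (lambda_div : series lambda @ \oo --> +oo)
  (lambda_sqr : cvgn (series (fun k => lambda k ^+ 2))).
Hypotheses (alo_gt0 : 0 < alo) (blo_gt0 : 0 < blo) (glo_gt0 : 0 < glo).
Hypotheses (alpha_bnd : forall k, alo <= alpha k <= ahi)
  (beta_bnd : forall k, blo <= beta k <= bhi)
  (gamma_bnd : forall k, glo <= gamma k <= ghi).
Hypotheses (phi_lb_star : phi_lb f C r = phi_star f C Q r) (mu_gt0 : 0 < mu).
Hypotheses (pQ_proj : forall k, is_proj (Qplus Q) (FF f (x k)) (pQ k))
  (pC_proj : forall k, is_proj C (x k) (pC k))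
  (istar_max : forall k, is_argmax f C r (x k) (istar k)).

Let rho k := FF f (x k) - pQ k.
Let z k := x k - pC k.
Let v k := rho k *m Defs.jacobian f (x k).
Let w k := r (istar k) *: grad (f (istar k)) (x k).
Let Delta k := phi f C r (x k) - phi_lb f C r.
Let d k := (if 0 <= Delta k then alpha k else 0) *: w k + beta k *: z k + gamma k *: v k.
Let eta k := Num.max mu (enorm (d k)).
Let s k := lambda k / eta k.

Hypothesis x_step : forall k, x k.+1 = x k - s k *: d k.

Let gap k := phi f C r (x k) - phi_star f C Q r.
Let gap_term k := if 0 <= Delta k then alpha k * gap k else 0.
Let theta k :=
  gap_term k + beta k * enorm (z k) ^+ 2 + gamma k * enorm (rho k) ^+ 2.

Let alpha_gt0 k : 0 < alpha k.
Proof. by case/andP: (alpha_bnd k) => /(lt_le_trans alo_gt0). Qed.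
Let beta_gt0 k : 0 < beta k.
Proof. by case/andP: (beta_bnd k) => /(lt_le_trans blo_gt0). Qed.
Let gamma_gt0 k : 0 < gamma k.
Proof. by case/andP: (gamma_bnd k) => /(lt_le_trans glo_gt0). Qed.

Let eta_gt0 k : 0 < eta k.
Proof. by rewrite lt_max mu_gt0. Qed.
Let s_ge0 k : 0 <= s k.
Proof. by rewrite divr_ge0 ?ltW ?eta_gt0. Qed.

Let r_le1 i : r i <= 1.
Proof. by rewrite -r_sum1 (bigD1 i) //= lerDl sumr_ge0 // => j _; rewrite ltW. Qed.

Let gap_term_ge0 k : 0 <= gap_term k.
Proof.
rewrite /gap_term /Delta phi_lb_star; case: ifP => // gap_ge0.
by rewrite mulr_ge0 ?(ltW (alpha_gt0 k)).
Qed.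

Let z_term_ge0 k : 0 <= beta k * enorm (z k) ^+ 2.
Proof. by rewrite mulr_ge0 ?sqr_ge0 ?(ltW (beta_gt0 k)). Qed.
Let rho_term_ge0 k : 0 <= gamma k * enorm (rho k) ^+ 2.
Proof. by rewrite mulr_ge0 ?sqr_ge0 ?(ltW (gamma_gt0 k)). Qed.

Lemma theta_ge0 k : 0 <= theta k.
Proof. by rewrite !addr_ge0 ?gap_term_ge0. Qed.

Lemma theta_ge_gap k : alo * gap k <= theta k.
Proof.
suff : alo * gap k <= gap_term k.
  by have := z_term_ge0 k; have := rho_term_ge0 k; rewrite /theta; lra.
rewrite /gap_term /Delta phi_lb_star -/(gap k).
case: ifP => [gap_ge0|/negbT]; first by case/andP: (alpha_bnd k) => ? _; rewrite ler_wpM2r.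
by rewrite -ltNge => gap_lt0; rewrite ltW // pmulr_rlt0.
Qed.

Lemma theta_ge_z k : blo * enorm (z k) ^+ 2 <= theta k.
Proof.
have : blo * enorm (z k) ^+ 2 <= beta k * enorm (z k) ^+ 2.
  by case/andP: (beta_bnd k) => ? _; rewrite ler_wpM2r ?sqr_ge0.
by have := gap_term_ge0 k; have := rho_term_ge0 k; rewrite /theta; lra.
Qed.

Lemma theta_ge_rho k : glo * enorm (rho k) ^+ 2 <= theta k.
Proof.
have : glo * enorm (rho k) ^+ 2 <= gamma k * enorm (rho k) ^+ 2.
  by case/andP: (gamma_bnd k) => ? _; rewrite ler_wpM2r ?sqr_ge0.
by have := gap_term_ge0 k; have := z_term_ge0 k; rewrite /theta; lra.
Qed.

Lemma theta_le_dot xs : Omega f C Q r xs -> forall k, theta k <= dot (d k) (x k - xs).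
Proof.
move=> [[/sqr_half_eq0 distC0 /sqr_half_eq0 distQ0] phi_xs] k.
have hw := gap_le_dot f_diff f_convex xs (ltW (r_gt0 _)) (istar_max k).
have hz := dist_sqr_le_dot C_convex (pC_proj k) distC0.
have hv := residual_sqr_le_dot f_diff f_convex Q_convex (pQ_proj k) distQ0.
rewrite /theta /d !dotDl !dotZl; apply: lerD; first apply: lerD.
- rewrite dotZl phi_xs in hw; rewrite /gap_term; case: ifP => _; last by rewrite mul0r.
  by rewrite /gap ler_pM2l ?alpha_gt0.
- by rewrite ler_pM2l ?beta_gt0.
- by rewrite ler_pM2l ?gamma_gt0.
Qed.

Lemma fejer_step xs : Omega f C Q r xs -> forall k,
  enorm (x k.+1 - xs) ^+ 2 <=
    enorm (x k - xs) ^+ 2 + lambda k ^+ 2 - s k * (2 * theta k).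
Proof.
move=> Oxs k; have theta_le := theta_le_dot Oxs k.
have step_le : s k * enorm (d k) <= lambda k.
  by rewrite /s mulrAC ler_pdivrMr // ler_pM2l // le_max lexx orbT.
have sd_ge0 : 0 <= s k * enorm (d k) by rewrite mulr_ge0 ?s_ge0 ?enorm_ge0.
have step_sqr : s k * (s k * dot (d k) (d k)) <= lambda k ^+ 2.
  by rewrite mulrA -expr2 -enorm_sqr -exprMn ler_pXn2r ?nnegrE ?(ltW (lambda_gt0 k)).
have -> : x k.+1 - xs = (x k - xs) - s k *: d k.
  by rewrite x_step; apply/rowP => j; rewrite !mxE; ring.
have := ler_wpM2l (s_ge0 k) theta_le; move: (x k - xs) => X.
rewrite !enorm_sqr dotBl !dotBr !dotZl !dotZr (dotC X (d k)); lra.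
Qed.

Lemma iterates_bounded : exists B, forall k, enorm (x k) <= B.
Proof.
have [xs Oxs] := Omega0.
have c_ge0 k : 0 <= s k * (2 * theta k).
  by rewrite mulr_ge0 ?s_ge0 // mulr_ge0 ?theta_ge0 ?ler0n.
exists (1 + (enorm (x 0%N - xs) ^+ 2 + limn (series (fun k => lambda k ^+ 2))) + enorm xs).
move=> k; have := quasi_fejer_bounded (a := fun k => enorm (x k - xs) ^+ 2)
  (c := fun k => s k * (2 * theta k)) (fejer_step Oxs) (fun k => sqr_ge0 _) lambda_sqr k.
have : 0 <= \sum_(0 <= j < k) s j * (2 * theta j) by apply: sumr_ge0 => j _.
have := sqr_ge0 (enorm (x k - xs) - 1); have := sqr_ge0 (enorm (x k - xs)).
have := enormD_le (x k - xs) xs; rewrite subrK.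
nra.
Qed.

Lemma enorm_direction_le k (Bw Bz Bv : R) : enorm (w k) <= Bw -> enorm (z k) <= Bz ->
  enorm (v k) <= Bv -> enorm (d k) <= ahi * Bw + bhi * Bz + ghi * Bv.
Proof.
move=> wB zB vB; case/andP: (alpha_bnd k) => _ alpha_le.
case/andP: (beta_bnd k) => _ beta_le; case/andP: (gamma_bnd k) => _ gamma_le.
have coef_le : `|if 0 <= Delta k then alpha k else 0| <= ahi.
  case: ifP => _; first by rewrite gtr0_norm ?alpha_gt0.
  by rewrite normr0 (le_trans (ltW (alpha_gt0 k))).
rewrite /d; apply: le_trans (enormD_le _ _) _; apply: lerD.
  apply: le_trans (enormD_le _ _) _; apply: lerD; rewrite enormZ.
    by rewrite ler_pM ?enorm_ge0.
  by rewrite gtr0_norm ?beta_gt0 // ler_pM ?enorm_ge0 ?(ltW (beta_gt0 k)).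
by rewrite enormZ gtr0_norm ?gamma_gt0 // ler_pM ?enorm_ge0 ?(ltW (gamma_gt0 k)).
Qed.

Let f_cont i : continuous (f i).
Proof. by move=> y; exact: differentiable_continuous. Qed.

Lemma eta_bounded : exists M, 0 < M /\ forall k, eta k <= M.
Proof.
have [E xE] := iterates_bounded.
have xE' k : `|x k| <= E by apply: le_trans (mx_norm_le_enorm _) (xE k).
have [Mg [Mg_ge0 gradB]] := bounded_on_mx_norm_le E grad_cont.
have [Mf [_ fB]] := bounded_on_mx_norm_le (V := R^o) E f_cont.
have grad_coord i k j : `|grad (f i) (x k) 0 j| <= Mg.
  exact: le_trans (coord_le_mx_norm _ j) (gradB i _ (xE' k)).
have [c0 Cc0] := C0; have [q0 Qq0] := Qplus_neq0 Q0.
pose Brho := m%:R * Mf + enorm q0.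
pose Bd := ahi * (n%:R * Mg) + bhi * (E + enorm c0) + ghi * (n%:R * (m%:R * (Brho * Mg))).
exists (Num.max mu Bd); split => [|k]; first by rewrite lt_max mu_gt0.
rewrite /eta ge_max le_max lexx /= le_max; apply/orP; right; apply: enorm_direction_le.
- rewrite enormZ gtr0_norm // -[X in _ <= X]mul1r.
  by rewrite ler_pM ?enorm_ge0 ?(ltW (r_gt0 _)) ?r_le1 ?enorm_le_coord.
- by apply: le_trans (enorm_proj_le (pC_proj k) Cc0) _; rewrite lerD2r.
- have rhoB : enorm (rho k) <= Brho.
    apply: le_trans (enorm_proj_le (pQ_proj k) Qq0) _; rewrite lerD2r.
    by apply: enorm_le_coord => i; rewrite mxE; exact: fB i _ (xE' k).
  apply: le_trans (enorm_mulmx_le (B := Mg) _ _) _; first by move=> i j; rewrite mxE.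
  by rewrite ler_wpM2l ?ler0n // ler_wpM2l ?ler0n // ler_wpM2r.
Qed.

Lemma theta_frequently_small : frequently_small theta.
Proof.
have [M [M_gt0 etaM]] := eta_bounded.
have [xs Oxs] := Omega0.
pose a k := enorm (x k - xs) ^+ 2.
pose L := limn (series (fun k => lambda k ^+ 2)).
apply: (frequently_small_weighted (B := M / 2 * (a 0%N + L))
  lambda_gt0 theta_ge0 lambda_div).
move=> K; have := quasi_fejer_bounded (a := a) (c := fun k => s k * (2 * theta k))
  (fejer_step Oxs) (fun k => sqr_ge0 _) lambda_sqr K.
have weighted_le : \sum_(0 <= k < K) lambda k * theta k <=
    M / 2 * \sum_(0 <= k < K) s k * (2 * theta k).
  rewrite mulr_sumr; apply: ler_sum => k _.
  have -> : M / 2 * (s k * (2 * theta k)) = M / eta k * (lambda k * theta k).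
    by rewrite /s; field; rewrite gt_eqF ?eta_gt0.
  rewrite ler_peMl ?mulr_ge0 ?theta_ge0 ?(ltW (lambda_gt0 k)) //.
  by rewrite ler_pdivlMr ?eta_gt0 // mul1r.
have a_ge0 : 0 <= a K by exact: sqr_ge0.
move=> fejer_sum; apply: le_trans weighted_le _.
by apply: ler_wpM2l; [rewrite divr_ge0 ?ltW | rewrite /L; lra].
Qed.

Lemma theta_cluster_point : exists xb, forall eps, 0 < eps -> forall N,
  exists k, [/\ (N <= k)%N, theta k < eps & `|xb - x k| < eps].
Proof.
have [E xE] := iterates_bounded.
apply: cluster_point_along theta_frequently_small => k.
exact: le_trans (mx_norm_le_enorm _) (xE k).
Qed.

Section ClusterPoint.
Variable xb : 'rV[R]_n.
Hypothesis xb_cluster : forall eps, 0 < eps -> forall N,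
  exists k, [/\ (N <= k)%N, theta k < eps & `|xb - x k| < eps].

Let close_with_small_theta del eps : 0 < del -> 0 < eps ->
  exists k, `|xb - x k| < del /\ theta k < eps.
Proof.
move=> del_gt0 eps_gt0.
have min_gt0 : 0 < Num.min del eps by rewrite lt_min del_gt0.
have [k [_ small close]] := xb_cluster min_gt0 0.
exists k; rewrite (lt_le_trans close) ?ge_min ?lexx //.
by rewrite (lt_le_trans small) ?ge_min ?lexx ?orbT.
Qed.

Let sqr_lt_of_theta (a B : R) k e : 0 < a -> 0 < e -> a * B ^+ 2 <= theta k ->
  theta k < a * e ^+ 2 -> 0 <= B -> B < e.
Proof.
move=> a_gt0 e_gt0 le lt B_ge0.
rewrite -(@ltr_pXn2r _ 2) ?nnegrE ?(ltW e_gt0) // -(ltr_pM2l a_gt0).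
exact: le_lt_trans le lt.
Qed.

Lemma cluster_edist_C : Defs.edist C xb = 0.
Proof.
apply/eqP; rewrite eq_le (edist_set_ge0 _ C0) andbT.
apply: (le0_of_le_mul_small (K := n%:R + 1)) => [|e /andP[e_gt0 _]].
  by rewrite addr_ge0.
have [k [close small]] :=
  close_with_small_theta e_gt0 (mulr_gt0 blo_gt0 (exprn_gt0 2 e_gt0)).
have z_lt := sqr_lt_of_theta blo_gt0 e_gt0 (theta_ge_z k) small (enorm_ge0 _).
apply: le_trans (edist_set_le _ (pC_proj k).1) _.
have -> : xb - pC k = (xb - x k) + z k by rewrite addrA subrK.
apply: le_trans (enormD_le _ _) _.
have := le_trans (enorm_le_mx_norm (xb - x k)) (ler_wpM2l (ler0n _ n) (ltW close)).
lra.
Qed.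

Lemma cluster_edist_Q : Defs.edist (Qplus Q) (FF f xb) = 0.
Proof.
apply/eqP; rewrite eq_le (edist_set_ge0 _ (Qplus_neq0 Q0)) andbT.
apply: (le0_of_le_mul_small (K := m%:R + 1)) => [|e /andP[e_gt0 _]].
  by rewrite addr_ge0.
have [del del_gt0 f_close] := near_continuous_family xb f_cont e_gt0.
have [k [close small]] :=
  close_with_small_theta del_gt0 (mulr_gt0 glo_gt0 (exprn_gt0 2 e_gt0)).
have rho_lt := sqr_lt_of_theta glo_gt0 e_gt0 (theta_ge_rho k) small (enorm_ge0 _).
apply: le_trans (edist_set_le _ (pQ_proj k).1) _.
have -> : FF f xb - pQ k = (FF f xb - FF f (x k)) + rho k by rewrite addrA subrK.
apply: le_trans (enormD_le _ _) _.
have : enorm (FF f xb - FF f (x k)) <= m%:R * e.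
  by apply: enorm_le_coord => i; rewrite !mxE; exact: ltW (f_close _ close i).
lra.
Qed.

Lemma cluster_phi_le : phi f C r xb <= phi_star f C Q r.
Proof.
rewrite -subr_le0; apply: (le0_of_le_mul_small (K := 2)) => // e /andP[e_gt0 _].
have [del del_gt0 f_close] := near_continuous_family xb f_cont e_gt0.
have [k [close small]] := close_with_small_theta del_gt0 (mulr_gt0 alo_gt0 e_gt0).
have gap_lt : gap k < e by rewrite -(ltr_pM2l alo_gt0) (le_lt_trans (theta_ge_gap k)).
suff : phi f C r xb <= phi f C r (x k) + e by rewrite /gap in gap_lt; lra.
apply: (phi_le_ub (Ordinal m_gt0)) => i.
have := phi_ge_term f C r (x k) i.
have : r i * (f i xb - f i (x k)) <= e.
  apply: le_trans (ler_norm _) _; rewrite normrM gtr0_norm // -[e]mul1r.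
  by rewrite ler_pM ?normr_ge0 ?(ltW (r_gt0 i)) ?r_le1 ?(ltW (f_close _ close i)).
lra.
Qed.

Lemma cluster_in_Omega : Omega f C Q r xb.
Proof.
have Cxb : C xb.
  apply: C_closed => B /nbhs_ballP [e e_gt0 ball_sub].
  have [c Cc close] := edist_set_eq0_approx C0 cluster_edist_C e_gt0.
  exists c; split => //; apply: ball_sub; rewrite -ball_normE /=.
  exact: le_lt_trans (mx_norm_le_enorm _) close.
split.
  by split; rewrite /HH /GG ?cluster_edist_C ?cluster_edist_Q expr0n /= mul0r.
apply/eqP; rewrite eq_le cluster_phi_le -phi_lb_star /=.
by apply: (phi_lb_le f_lb (Ordinal m_gt0)) => // i; exact: ltW.
Qed.

End ClusterPoint.

Lemma abp_converges : exists xinf, Omega f C Q r xinf /\ x @ \oo --> xinf.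
Proof.
have [xb xb_cluster] := theta_cluster_point.
have Oxb := cluster_in_Omega xb_cluster.
exists xb; split => //.
apply: (cvg_quasi_fejer_cluster (e := fun k => lambda k ^+ 2) _
  (fun k => sqr_ge0 _) lambda_sqr).
  by move=> k; have := fejer_step Oxb k; have := s_ge0 k; have := theta_ge0 k; nra.
by move=> eps eps_gt0 N; have [k [Nk _ close]] := xb_cluster _ eps_gt0 N; exists k.
Qed.

End ABP.

Unset Implicit Arguments.

Theorem theorem1 (R : realType) (n m : nat)
  (f : 'I_m -> 'rV[R]_n -> R) (C : set 'rV[R]_n) (Q : set 'rV[R]_m)
  (r : 'I_m -> R) (mu : R) (alpha beta gamma lambda : nat -> R)
  (x : nat -> 'rV[R]_n)
  (alo ahi blo bhi glo ghi : R) :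
  (0 < n)%N -> (0 < m)%N ->
  (* weights r: r_i > 0, sum r_i = 1 *)
  (forall i, 0 < r i) -> \sum_(i < m) r i = 1 ->
  (* (A1) F continuously differentiable *)
  (forall i (y : 'rV[R]_n), differentiable (f i) y) ->
  (forall i, continuous (grad (f i))) ->
  (* (A2) *)
  C !=set0 -> closed C -> convex_set C ->
  Q !=set0 -> closed Q -> convex_set Q ->
  (forall i, exists M : R, forall y, C y -> M <= f i y) ->
  (* (A3) *)
  (forall i, convex_fun (f i)) ->
  (* (A4) *)
  Omega f C Q r !=set0 ->
  (* (A5) *)
  (forall k, 0 < lambda k) ->
  series lambda @ \oo --> +oo ->
  cvgn (series (fun k => lambda k ^+ 2)) ->
  (* (A6) *)
  0 < alo -> alo <= ahi -> 0 < blo -> blo <= bhi -> 0 < glo -> glo <= ghi ->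
  (forall k, alo <= alpha k <= ahi) ->
  (forall k, blo <= beta k <= bhi) ->
  (forall k, glo <= gamma k <= ghi) ->
  (* (A7) *)
  phi_lb f C r = phi_star f C Q r ->
  (* ABP iteration with mu > 0 and arbitrary starting point x 0 *)
  0 < mu ->
  (forall k, abp_step f C Q r mu (alpha k) (beta k) (gamma k) (lambda k)
                      (x k) (x k.+1)) ->
  exists xinf : 'rV[R]_n, Omega f C Q r xinf /\ x @ \oo --> xinf.
Proof.
(* Q^+ need not be closed, and only dist(F(x), Q^+) = 0 is used, so closedness of Q is not *)
move=> _ m_gt0 r_gt0 r_sum1 f_diff grad_cont C0 C_closed C_convex Q0 _ Q_convex
  f_lb f_convex Omega0 lambda_gt0 lambda_div lambda_sqr alo_gt0 _ blo_gt0 _ glo_gt0 _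
  alpha_bnd beta_bnd gamma_bnd phi_lb_star mu_gt0 step.
have [pQ /choice [pC /choice [istar spec]]] := choice step.
exact: (abp_converges m_gt0 r_gt0 r_sum1 f_diff grad_cont C0 C_closed
  (convex_set_comb C_convex) Q0 (convex_set_comb Q_convex) f_lb f_convex Omega0
  lambda_gt0 lambda_div lambda_sqr alo_gt0 blo_gt0 glo_gt0 alpha_bnd beta_bnd gamma_bnd
  phi_lb_star mu_gt0 (fun k => (spec k).1) (fun k => (spec k).2.1)
  (fun k => (spec k).2.2.1) (fun k => (spec k).2.2.2)).
Qed.
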